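(* Let an $m\times n$ net in $I^3$ have all its faces in non-isotropic planes. Then the net is deformable if and only if its top view is deformable.
   Context: $I^3$ is $\mathbb{R}^3$ with coordinates $(x,y,z)$; a plane is isotropic if parallel to the $z$-axis; the top view of a point $(x,y,z)$ is $(x,y)$, and the top view of a net is the planar net of top views of its vertices. An $m\times n$ net: points $F_{ij}$, $0\le i\le m,0\le j\le n$, with $F_{ij},F_{i+1,j},F_{i+1,j+1},F_{i,j+1}$ consecutive vertices of a convex planar quadrilateral (face) for all $0\le i<m,0\le j<n$. Two nets are parallel (Combescure transformations of each other) if corresponding edges are parallel. A net is deformable if it is contained in a continuous family of pairwise non-congruent (in the Euclidean or isotropic sense) parallel nets with the same areas of corresponding faces. Isotropic congruences are maps $\mathbf{x}\mapsto A\mathbf{x}+\mathbf{b}$, $A=\begin{pmatrix}\cos\phi&-\sin\phi&0\\ \sin\phi&\cos\phi&0\\ c_1&c_2&1\end{pmatrix}$. *)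

From Stdlib Require Import Reals Lra Lia.
Open Scope R_scope.

(* Points of R^3 (= I^3) and of R^2. *)
Record pt3 := P3 { px : R; py : R; pz : R }.
Record pt2 := P2 { qx : R; qy : R }.

Definition sub3 (p q : pt3) : pt3 := P3 (px p - px q) (py p - py q) (pz p - pz q).
Definition scal3 (l : R) (p : pt3) : pt3 := P3 (l * px p) (l * py p) (l * pz p).
Definition dot3 (p q : pt3) : R := px p * px q + py p * py q + pz p * pz q.
Definition cross3 (p q : pt3) : pt3 :=
  P3 (py p * pz q - pz p * py q) (pz p * px q - px p * pz q) (px p * py q - py p * px q).
Definition det3 (a b c : pt3) : R := dot3 a (cross3 b c).

Definition sub2 (p q : pt2) : pt2 := P2 (qx p - qx q) (qy p - qy q).
Definition scal2 (l : R) (p : pt2) : pt2 := P2 (l * qx p) (l * qy p).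
Definition cross2 (p q : pt2) : R := qx p * qy q - qy p * qx q.

(* A net: values F i j only matter for 0 <= i <= m, 0 <= j <= n. *)
Definition net3 := nat -> nat -> pt3.
Definition net2 := nat -> nat -> pt2.

(* p0 p1 p2 p3 are consecutive vertices of a convex planar quadrilateral in R^3:
   coplanar, and all four turning vectors (cross products of consecutive edges)
   are nonzero and point to the same side of the plane (strict convexity of a
   genuine quadrilateral). *)
Definition convex_quad3 (p0 p1 p2 p3 : pt3) : Prop :=
  let e0 := sub3 p1 p0 in let e1 := sub3 p2 p1 in
  let e2 := sub3 p3 p2 in let e3 := sub3 p0 p3 in
  let c0 := cross3 e0 e1 in
  det3 (sub3 p1 p0) (sub3 p2 p0) (sub3 p3 p0) = 0 /\
  0 < dot3 c0 c0 /\
  0 < dot3 c0 (cross3 e1 e2) /\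
  0 < dot3 c0 (cross3 e2 e3) /\
  0 < dot3 c0 (cross3 e3 e0).

Definition convex_quad2 (p0 p1 p2 p3 : pt2) : Prop :=
  let e0 := sub2 p1 p0 in let e1 := sub2 p2 p1 in
  let e2 := sub2 p3 p2 in let e3 := sub2 p0 p3 in
  let c0 := cross2 e0 e1 in
  0 < c0 * c0 /\
  0 < c0 * cross2 e1 e2 /\
  0 < c0 * cross2 e2 e3 /\
  0 < c0 * cross2 e3 e0.

Definition is_net3 (m n : nat) (F : net3) : Prop :=
  forall i j, (i < m)%nat -> (j < n)%nat ->
    convex_quad3 (F i j) (F (S i) j) (F (S i) (S j)) (F i (S j)).

Definition is_net2 (m n : nat) (F : net2) : Prop :=
  forall i j, (i < m)%nat -> (j < n)%nat ->
    convex_quad2 (F i j) (F (S i) j) (F (S i) (S j)) (F i (S j)).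

(* The plane of face (i,j) is non-isotropic (not parallel to the z-axis):
   its normal vector, the cross product of two consecutive edges, has a
   nonzero z-component. *)
Definition face_nonisotropic (F : net3) (i j : nat) : Prop :=
  pz (cross3 (sub3 (F (S i) j) (F i j)) (sub3 (F (S i) (S j)) (F (S i) j))) <> 0.

Definition top (p : pt3) : pt2 := P2 (px p) (py p).
Definition top_view (F : net3) : net2 := fun i j => top (F i j).

(* Euclidean area of a planar quadrilateral (shoelace formula). *)
Definition area2 (p0 p1 p2 p3 : pt2) : R :=
  Rabs ((cross2 p0 p1 + cross2 p1 p2 + cross2 p2 p3 + cross2 p3 p0) / 2).

(* Area of face (i,j) of a planar net; the isotropic area of a face of a
   net in I^3 is the Euclidean area of its top view. *)
Definition face_area2 (F : net2) (i j : nat) : R :=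
  area2 (F i j) (F (S i) j) (F (S i) (S j)) (F i (S j)).
Definition face_area_iso (F : net3) (i j : nat) : R :=
  face_area2 (top_view F) i j.

Definition parallel3 (m n : nat) (F G : net3) : Prop :=
  (forall i j, (i < m)%nat -> (j <= n)%nat ->
     exists l, sub3 (G (S i) j) (G i j) = scal3 l (sub3 (F (S i) j) (F i j))) /\
  (forall i j, (i <= m)%nat -> (j < n)%nat ->
     exists l, sub3 (G i (S j)) (G i j) = scal3 l (sub3 (F i (S j)) (F i j))).

Definition parallel2 (m n : nat) (F G : net2) : Prop :=
  (forall i j, (i < m)%nat -> (j <= n)%nat ->
     exists l, sub2 (G (S i) j) (G i j) = scal2 l (sub2 (F (S i) j) (F i j))) /\
  (forall i j, (i <= m)%nat -> (j < n)%nat ->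
     exists l, sub2 (G i (S j)) (G i j) = scal2 l (sub2 (F i (S j)) (F i j))).

Definition same_areas_iso (m n : nat) (F G : net3) : Prop :=
  forall i j, (i < m)%nat -> (j < n)%nat -> face_area_iso F i j = face_area_iso G i j.

Definition same_areas2 (m n : nat) (F G : net2) : Prop :=
  forall i j, (i < m)%nat -> (j < n)%nat -> face_area2 F i j = face_area2 G i j.

Definition iso_congr_map (phi c1 c2 : R) (b : pt3) (p : pt3) : pt3 :=
  P3 (cos phi * px p - sin phi * py p + px b)
     (sin phi * px p + cos phi * py p + py b)
     (c1 * px p + c2 * py p + pz p + pz b).

Definition iso_congruent (m n : nat) (F G : net3) : Prop :=
  exists phi c1 c2 b, forall i j, (i <= m)%nat -> (j <= n)%nat ->
    G i j = iso_congr_map phi c1 c2 b (F i j).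

Definition eucl_congruent2 (m n : nat) (F G : net2) : Prop :=
  exists a11 a12 a21 a22 b1 b2,
    a11 * a11 + a21 * a21 = 1 /\ a12 * a12 + a22 * a22 = 1 /\
    a11 * a12 + a21 * a22 = 0 /\
    forall i j, (i <= m)%nat -> (j <= n)%nat ->
      G i j = P2 (a11 * qx (F i j) + a12 * qy (F i j) + b1)
                 (a21 * qx (F i j) + a22 * qy (F i j) + b2).

(* Continuity is required on all of R, which
   is harmless (a continuous family on [a,b] extends constantly). *)
Definition deformable_iso (m n : nat) (F : net3) : Prop :=
  exists (P : R -> net3) (a b t0 : R),
    (forall i j, continuity (fun t => px (P t i j)) /\
                 continuity (fun t => py (P t i j)) /\
                 continuity (fun t => pz (P t i j))) /\
    a < b /\ a <= t0 <= b /\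
    (forall i j, (i <= m)%nat -> (j <= n)%nat -> P t0 i j = F i j) /\
    (forall t, a <= t <= b -> is_net3 m n (P t)) /\
    (forall s t, a <= s <= b -> a <= t <= b ->
       parallel3 m n (P s) (P t) /\ same_areas_iso m n (P s) (P t) /\
       (s <> t -> ~ iso_congruent m n (P s) (P t))).

Definition deformable2 (m n : nat) (F : net2) : Prop :=
  exists (P : R -> net2) (a b t0 : R),
    (forall i j, continuity (fun t => qx (P t i j)) /\
                 continuity (fun t => qy (P t i j))) /\
    a < b /\ a <= t0 <= b /\
    (forall i j, (i <= m)%nat -> (j <= n)%nat -> P t0 i j = F i j) /\
    (forall t, a <= t <= b -> is_net2 m n (P t)) /\
    (forall s t, a <= s <= b -> a <= t <= b ->
       parallel2 m n (P s) (P t) /\ same_areas2 m n (P s) (P t) /\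
       (s <> t -> ~ eucl_congruent2 m n (P s) (P t))).

(* Since its plane is not vertical, a face of F is the graph of an affine function
   z = al x + be y + c over its top view; hence it is convex iff its top view is,
   and isotropic areas are areas of top views.
   (=>) The top views of an isotropic deformation P form a Euclidean deformation.  If
   two of them were congruent by an orthogonal map, every edge of P t would be k
   times the corresponding edge of P s with k * k = 1; continuity and the
   non-vanishing of edges exclude k = -1, so P s and P t differ by a translation.
   (<=) A deformation Q of the top view scales each edge of the top view by some
   factor; scaling the spatial edges of F by the same factors gives z-increments
   that close up around every face, because faces of F are planar.  Integrating
   them lifts Q to an isotropic deformation of F. *)

From Stdlib Require Import Reals Lra Lia.
Open Scope R_scope.

Lemma pt3_eq (p q : pt3) : px p = px q -> py p = py q -> pz p = pz q -> p = q.
Proof. destruct p, q; simpl; intros -> -> ->; reflexivity. Qed.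

Lemma pt2_eq (p q : pt2) : qx p = qx q -> qy p = qy q -> p = q.
Proof. destruct p, q; simpl; intros -> ->; reflexivity. Qed.

Definition norm2 (p : pt2) : R := qx p * qx p + qy p * qy p.

Definition hedge (F : net3) (i j : nat) : pt3 := sub3 (F (S i) j) (F i j).
Definition vedge (F : net3) (i j : nat) : pt3 := sub3 (F i (S j)) (F i j).

Lemma cross2_top (p q r s : pt3) :
  cross2 (sub2 (top p) (top q)) (sub2 (top r) (top s)) = pz (cross3 (sub3 p q) (sub3 r s)).
Proof. reflexivity. Qed.

Lemma cross3_scal (k l : R) (u v : pt3) :
  cross3 (scal3 k u) (scal3 l v) = scal3 (k * l) (cross3 u v).
Proof. apply pt3_eq; simpl; ring. Qed.

(* Vector form: |c|^2 y - (c.y) c = c x (y x c) with c = u x v, y = w x x. *)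
Lemma normal_cross_identity (u v w x : pt3) :
  let c := cross3 u v in
  dot3 c c * pz (cross3 w x) - dot3 c (cross3 w x) * pz c =
  det3 u v w * pz (cross3 c x) - det3 u v x * pz (cross3 c w).
Proof.
  destruct u, v, w, x; unfold det3, dot3, cross3; simpl; ring.
Qed.

Lemma pos_iff_same_sign (N z w d : R) :
  0 < N -> z <> 0 -> N * w = d * z -> (0 < d <-> 0 < z * w).
Proof.
  intros HN Hz E.
  assert (Hzz : 0 < z * z) by nra.
  assert (E' : N * (z * w) = d * (z * z))
    by (replace (N * (z * w)) with (z * (N * w)) by ring; rewrite E; ring).
  split; intro H; nra.
Qed.

(* Every turning vector is a multiple of the normal [c0], so its scalar product
   with [c0] has the sign of the product of the z-components. *)
Lemma convex_quad3_top (p0 p1 p2 p3 : pt3) :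
  det3 (sub3 p1 p0) (sub3 p2 p0) (sub3 p3 p0) = 0 ->
  pz (cross3 (sub3 p1 p0) (sub3 p2 p1)) <> 0 ->
  convex_quad3 p0 p1 p2 p3 <-> convex_quad2 (top p0) (top p1) (top p2) (top p3).
Proof.
  intros HD Hz.
  set (e0 := sub3 p1 p0) in *; set (e1 := sub3 p2 p1) in *;
  set (e2 := sub3 p3 p2); set (e3 := sub3 p0 p3); set (c0 := cross3 e0 e1) in *.
  assert (HN : 0 < dot3 c0 c0).
  { pose proof (Rsqr_pos_lt _ Hz).
    pose proof (Rle_0_sqr (px c0)); pose proof (Rle_0_sqr (py c0)).
    unfold dot3, Rsqr in *; lra. }
  assert (Hturn : forall w x, det3 e0 e1 w = 0 -> det3 e0 e1 x = 0 ->
            (0 < dot3 c0 (cross3 w x) <-> 0 < pz c0 * pz (cross3 w x))).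
  { intros w x Hw Hx. apply (pos_iff_same_sign (dot3 c0 c0)); [exact HN | exact Hz |].
    pose proof (normal_cross_identity e0 e1 w x) as I; cbv zeta in I; fold c0 in I.
    rewrite Hw, Hx in I. lra. }
  assert (D1 : det3 e0 e1 e1 = 0)
    by (unfold e1, det3, dot3, cross3; simpl; ring).
  assert (D2 : det3 e0 e1 e2 = 0).
  { rewrite <- HD. unfold e0, e1, e2, det3, dot3, cross3; simpl; ring. }
  assert (D3 : det3 e0 e1 e3 = 0).
  { transitivity (- det3 e0 (sub3 p2 p0) (sub3 p3 p0)); [|lra].
    unfold e0, e1, e3, det3, dot3, cross3; simpl; ring. }
  assert (D0 : det3 e0 e1 e0 = 0)
    by (unfold e0, det3, dot3, cross3; simpl; ring).
  unfold convex_quad3, convex_quad2; cbv zeta; rewrite !cross2_top; fold e0 e1 e2 e3 c0.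
  rewrite (Hturn e1 e2 D1 D2), (Hturn e2 e3 D2 D3), (Hturn e3 e0 D3 D0).
  split; [intros (_ & _ & H) | intros (_ & H)]; repeat split; try tauto; nra.
Qed.
Definition on_slope (al be : R) (u : pt3) : Prop := pz u = al * px u + be * py u.

Lemma on_slope_of_normal (N d : pt3) :
  pz N <> 0 -> dot3 N d = 0 -> on_slope (- px N / pz N) (- py N / pz N) d.
Proof.
  unfold on_slope, dot3. intros Hz E.
  apply (Rmult_eq_reg_l (pz N)); [|exact Hz].
  field_simplify; [lra | exact Hz].
Qed.

Lemma coplanar_on_slope (p0 p1 p2 p3 : pt3) :
  det3 (sub3 p1 p0) (sub3 p2 p0) (sub3 p3 p0) = 0 ->
  pz (cross3 (sub3 p1 p0) (sub3 p2 p1)) <> 0 ->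
  exists al be, on_slope al be (sub3 p1 p0) /\ on_slope al be (sub3 p2 p1) /\
                on_slope al be (sub3 p3 p0) /\ on_slope al be (sub3 p2 p3).
Proof.
  intros HD Hz. set (N := cross3 (sub3 p1 p0) (sub3 p2 p1)) in *.
  assert (Hexpand : forall q r : pt3, dot3 N (sub3 q r) =
            det3 (sub3 p1 p0) (sub3 p2 p0) (sub3 q p0) - det3 (sub3 p1 p0) (sub3 p2 p0) (sub3 r p0))
    by (intros; unfold N; destruct p0, p1, p2, q, r; unfold det3, dot3, cross3; simpl; ring).
  assert (Hdet : forall q, q = p0 \/ q = p1 \/ q = p2 \/ q = p3 ->
            det3 (sub3 p1 p0) (sub3 p2 p0) (sub3 q p0) = 0).
  { intros q [-> | [-> | [-> | ->]]]; try exact HD;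
      destruct p0, p1, p2; unfold det3, dot3, cross3; simpl; ring. }
  exists (- px N / pz N), (- py N / pz N).
  repeat split; apply on_slope_of_normal; try exact Hz; rewrite Hexpand, !Hdet; auto; ring.
Qed.

Lemma on_slope_scal (al be k : R) (u : pt3) :
  on_slope al be u -> on_slope al be (scal3 k u).
Proof. unfold on_slope; simpl; intros ->; ring. Qed.

Lemma on_slope_sub_trans (al be : R) (p q r : pt3) :
  on_slope al be (sub3 p q) -> on_slope al be (sub3 q r) -> on_slope al be (sub3 p r).
Proof. unfold on_slope; simpl; lra. Qed.

Lemma det3_on_slope (al be : R) (u v w : pt3) :
  on_slope al be u -> on_slope al be v -> on_slope al be w -> det3 u v w = 0.
Proof.
  unfold on_slope, det3, dot3, cross3; simpl; intros -> -> ->; ring.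
Qed.

Lemma on_slope_scaled_edge (al be k : R) (e : pt3) (w : pt2) :
  on_slope al be e -> w = scal2 k (top e) -> k * pz e = al * qx w + be * qy w.
Proof. unfold on_slope; intros -> ->; simpl; ring. Qed.

Lemma norm2_pos_of_cross2 (e f : pt2) : cross2 e f <> 0 -> 0 < norm2 e /\ 0 < norm2 f.
Proof.
  unfold cross2, norm2; intros H.
  destruct e as [x y], f as [u v]; simpl in *.
  split; apply Rnot_le_lt; intro Hle; apply H.
  - assert (x = 0) as -> by nra. assert (y = 0) as -> by nra. ring.
  - assert (u = 0) as -> by nra. assert (v = 0) as -> by nra. ring.
Qed.

Lemma convex_quad2_edges (p0 p1 p2 p3 : pt2) : convex_quad2 p0 p1 p2 p3 ->
  0 < norm2 (sub2 p1 p0) /\ 0 < norm2 (sub2 p2 p1) /\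
  0 < norm2 (sub2 p3 p2) /\ 0 < norm2 (sub2 p0 p3).
Proof.
  intros (H0 & _ & H2 & _).
  assert (A : cross2 (sub2 p1 p0) (sub2 p2 p1) <> 0) by (intro E; rewrite E in H0; lra).
  assert (B : cross2 (sub2 p3 p2) (sub2 p0 p3) <> 0)
    by (intro E; rewrite E, Rmult_0_r in H2; lra).
  destruct (norm2_pos_of_cross2 _ _ A), (norm2_pos_of_cross2 _ _ B). tauto.
Qed.

Lemma norm2_sub2_swap (p q : pt2) : norm2 (sub2 p q) = norm2 (sub2 q p).
Proof. unfold norm2; simpl; ring. Qed.

Lemma is_net2_hedge_pos (m n : nat) (Q : net2) : (0 < n)%nat -> is_net2 m n Q ->
  forall i j, (i < m)%nat -> (j <= n)%nat -> 0 < norm2 (sub2 (Q (S i) j) (Q i j)).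
Proof.
  intros Hn HQ i j Hi Hj.
  destruct (Nat.lt_ge_cases j n) as [Hjn | Hjn].
  - apply (convex_quad2_edges _ _ _ _ (HQ i j Hi Hjn)).
  - destruct j as [|j]; [lia|].
    destruct (convex_quad2_edges _ _ _ _ (HQ i j Hi ltac:(lia))) as (_ & _ & H & _).
    rewrite norm2_sub2_swap; exact H.
Qed.

Lemma is_net2_vedge_pos (m n : nat) (Q : net2) : (0 < m)%nat -> is_net2 m n Q ->
  forall i j, (i <= m)%nat -> (j < n)%nat -> 0 < norm2 (sub2 (Q i (S j)) (Q i j)).
Proof.
  intros Hm HQ i j Hi Hj.
  destruct (Nat.lt_ge_cases i m) as [Him | Him].
  - destruct (convex_quad2_edges _ _ _ _ (HQ i j Him Hj)) as (_ & _ & _ & H).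
    rewrite norm2_sub2_swap; exact H.
  - destruct i as [|i]; [lia|].
    apply (convex_quad2_edges _ _ _ _ (HQ i j ltac:(lia) Hj)).
Qed.

Lemma top_view_net (m n : nat) (F : net3) : is_net3 m n F ->
  (forall i j, (i < m)%nat -> (j < n)%nat -> face_nonisotropic F i j) ->
  is_net2 m n (top_view F).
Proof.
  intros HF Hiso i j Hi Hj.
  pose proof (HF i j Hi Hj) as Hq; destruct Hq as [HD _].
  apply (convex_quad3_top _ _ _ _ HD (Hiso i j Hi Hj)), HF; assumption.
Qed.

Lemma face_nonisotropic_parallel (F G : net3) (i j : nat) (k l : R) :
  hedge G i j = scal3 k (hedge F i j) ->
  vedge G (S i) j = scal3 l (vedge F (S i) j) ->
  0 < dot3 (cross3 (hedge G i j) (vedge G (S i) j)) (cross3 (hedge G i j) (vedge G (S i) j)) ->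
  face_nonisotropic F i j -> face_nonisotropic G i j.
Proof.
  unfold face_nonisotropic; fold (hedge F i j) (vedge F (S i) j) (hedge G i j) (vedge G (S i) j).
  intros -> -> Hd Hz; rewrite cross3_scal in *; simpl; intro H.
  apply Rmult_integral in H as [H | H]; [|contradiction].
  unfold dot3 in Hd; simpl in Hd; rewrite H in Hd; lra.
Qed.

Lemma parallel3_top (m n : nat) (F G : net3) :
  parallel3 m n F G -> parallel2 m n (top_view F) (top_view G).
Proof.
  intros [Hh Hv]; split; intros i j Hi Hj;
    [destruct (Hh i j Hi Hj) as [l E] | destruct (Hv i j Hi Hj) as [l E]];
    exists l; apply pt2_eq; simpl; [apply (f_equal px E) | apply (f_equal py E)
                                    | apply (f_equal px E) | apply (f_equal py E)].
Qed.

Lemma iso_congruent_top (m n : nat) (F G : net3) :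
  iso_congruent m n F G -> eucl_congruent2 m n (top_view F) (top_view G).
Proof.
  intros (phi & c1 & c2 & b & HG).
  pose proof (sin2_cos2 phi) as SC; unfold Rsqr in SC.
  exists (cos phi), (- sin phi), (sin phi), (cos phi), (px b), (py b).
  repeat split; [lra | lra | ring |].
  intros i j Hi Hj; unfold top_view; rewrite (HG i j Hi Hj).
  apply pt2_eq; simpl; ring.
Qed.
Lemma grid_eq_of_diff (m n : nat) (g h : nat -> nat -> R) :
  (forall i j, (i < m)%nat -> (j <= n)%nat -> g (S i) j - g i j = h (S i) j - h i j) ->
  (forall i j, (i <= m)%nat -> (j < n)%nat -> g i (S j) - g i j = h i (S j) - h i j) ->
  forall i j, (i <= m)%nat -> (j <= n)%nat -> g i j - h i j = g O O - h O O.
Proof.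
  intros Hh Hv.
  assert (Hcol : forall j, (j <= n)%nat -> g O j - h O j = g O O - h O O).
  { induction j as [|j IH]; intros Hj; [reflexivity|].
    specialize (Hv O j ltac:(lia) ltac:(lia)); specialize (IH ltac:(lia)); lra. }
  induction i as [|i IH]; intros j Hi Hj; [auto|].
  specialize (Hh i j ltac:(lia) Hj); specialize (IH j ltac:(lia) Hj); lra.
Qed.

Section GridPotential.

Variables (z0 : R) (h v : nat -> nat -> R).

Fixpoint column_potential (j : nat) : R :=
  match j with O => z0 | S j => column_potential j + v O j end.

Fixpoint grid_potential (i j : nat) : R :=
  match i with O => column_potential j | S i => grid_potential i j + h i j end.

Lemma grid_potential_vdiff (m n : nat) :
  (forall i j, (i < m)%nat -> (j < n)%nat -> h i j + v (S i) j = v i j + h i (S j)) ->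
  forall i j, (i <= m)%nat -> (j < n)%nat -> grid_potential i (S j) - grid_potential i j = v i j.
Proof.
  intros Hclose i j Hi Hj; induction i as [|i IH]; simpl; [ring|].
  specialize (IH ltac:(lia)); specialize (Hclose i j ltac:(lia) Hj); lra.
Qed.

End GridPotential.

Lemma continuity_add (f g : R -> R) :
  continuity f -> continuity g -> continuity (fun t => f t + g t).
Proof. apply continuity_plus. Qed.

Lemma continuity_sub (f g : R -> R) :
  continuity f -> continuity g -> continuity (fun t => f t - g t).
Proof. apply continuity_minus. Qed.

Lemma continuity_mul (f g : R -> R) :
  continuity f -> continuity g -> continuity (fun t => f t * g t).
Proof. apply continuity_mult. Qed.

Lemma continuity_cst (c : R) : continuity (fun _ => c).
Proof. apply continuity_const; intros x y; reflexivity. Qed.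

Lemma continuity_grid_potential (z0 : R) (h v : R -> nat -> nat -> R) :
  (forall i j, continuity (fun t => h t i j)) -> (forall i j, continuity (fun t => v t i j)) ->
  forall i j, continuity (fun t => grid_potential z0 (h t) (v t) i j).
Proof.
  intros Ch Cv i j; induction i as [|i IH]; simpl.
  - induction j as [|j IHj]; simpl; [apply continuity_cst | apply continuity_add; auto].
  - apply continuity_add; auto.
Qed.

(* Otherwise the scalar product with [U s] would vanish between s and t (IVT),
   forcing some [U r] to be zero. *)
Lemma parallel_family_coeff_pos (U : R -> pt3) (a b s t k : R) :
  continuity (fun r => px (U r)) -> continuity (fun r => py (U r)) ->
  continuity (fun r => pz (U r)) ->
  a <= s <= b -> a <= t <= b ->
  (forall r, a <= r <= b -> exists kr, U r = scal3 kr (U s)) ->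
  (forall r, a <= r <= b -> 0 < dot3 (U r) (U r)) ->
  U t = scal3 k (U s) -> 0 < k.
Proof.
  intros Cx Cy Cz Hs Ht Hpar Hpos Ek.
  set (f := fun r => dot3 (U r) (U s)).
  assert (Cf : continuity f).
  { unfold f, dot3.
    repeat apply continuity_add; apply continuity_mul; auto using continuity_cst. }
  assert (Fs : 0 < f s) by exact (Hpos s Hs).
  assert (Ft : f t = k * f s) by (unfold f; rewrite Ek; unfold dot3; simpl; ring).
  apply Rnot_le_lt; intro Hk.
  assert (Hsign : f s * f t <= 0) by (rewrite Ft; nra).
  assert (Hzero : exists r, a <= r <= b /\ f r = 0).
  { destruct (Rle_or_lt s t) as [Hst | Hts].
    - destruct (IVT_cor f s t Cf Hst Hsign) as (r & Hr & Fr); exists r; split; [lra | exact Fr].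
    - rewrite Rmult_comm in Hsign.
      destruct (IVT_cor f t s Cf (Rlt_le _ _ Hts) Hsign) as (r & Hr & Fr).
      exists r; split; [lra | exact Fr]. }
  destruct Hzero as (r & Hr & Fr); destruct (Hpar r Hr) as [kr Er].
  pose proof (Hpos r Hr) as Hrpos.
  assert (Fr' : f r = kr * f s) by (unfold f; rewrite Er; unfold dot3; simpl; ring).
  assert (kr = 0) by nra.
  rewrite Er in Hrpos; unfold dot3 in Hrpos; simpl in Hrpos; subst kr; lra.
Qed.

Lemma orthogonal_norm2 (a11 a12 a21 a22 x y : R) :
  a11 * a11 + a21 * a21 = 1 -> a12 * a12 + a22 * a22 = 1 -> a11 * a12 + a21 * a22 = 0 ->
  norm2 (P2 (a11 * x + a12 * y) (a21 * x + a22 * y)) = norm2 (P2 x y).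
Proof.
  unfold norm2; simpl; intros O1 O2 O3.
  transitivity (x * x * (a11 * a11 + a21 * a21) + y * y * (a12 * a12 + a22 * a22)
                + 2 * x * y * (a11 * a12 + a21 * a22)); [ring|].
  rewrite O1, O2, O3; ring.
Qed.

(* The orthogonal map forces [U t = k U s] with [k * k = 1], and [k > 0]. *)
Lemma parallel_family_rigid (U : R -> pt3) (a b s t a11 a12 a21 a22 : R) :
  continuity (fun r => px (U r)) -> continuity (fun r => py (U r)) ->
  continuity (fun r => pz (U r)) ->
  a <= s <= b -> a <= t <= b ->
  (forall r, a <= r <= b -> exists kr, U r = scal3 kr (U s)) ->
  (forall r, a <= r <= b -> 0 < norm2 (top (U r))) ->
  a11 * a11 + a21 * a21 = 1 -> a12 * a12 + a22 * a22 = 1 -> a11 * a12 + a21 * a22 = 0 ->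
  top (U t) = P2 (a11 * px (U s) + a12 * py (U s)) (a21 * px (U s) + a22 * py (U s)) ->
  U t = U s.
Proof.
  intros Cx Cy Cz Hs Ht Hpar Hpos O1 O2 O3 Etop.
  assert (Hpos3 : forall r, a <= r <= b -> 0 < dot3 (U r) (U r)).
  { intros r Hr; pose proof (Hpos r Hr); pose proof (Rle_0_sqr (pz (U r))).
    unfold norm2, dot3, Rsqr in *; simpl in *; lra. }
  destruct (Hpar t Ht) as [k Ek].
  pose proof (parallel_family_coeff_pos U a b s t k Cx Cy Cz Hs Ht Hpar Hpos3 Ek) as Hk.
  pose proof (f_equal norm2 Etop) as En.
  rewrite orthogonal_norm2 in En by assumption.
  pose proof (Hpos s Hs) as Hns.
  rewrite Ek in En; unfold norm2 in En, Hns; simpl in En, Hns.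
  set (x := px (U s)) in *; set (y := py (U s)) in *.
  assert (Hkk : (k * k - 1) * (x * x + y * y) = 0).
  { transitivity (k * x * (k * x) + k * y * (k * y) - (x * x + y * y)); [ring | lra]. }
  apply Rmult_integral in Hkk as [Hkk | Hkk]; [|lra].
  assert (k = 1) by nra.
  rewrite Ek; subst k; apply pt3_eq; simpl; ring.
Qed.
Lemma iso_congruent_of_edges (m n : nat) (F G : net3) :
  (forall i j, (i < m)%nat -> (j <= n)%nat -> hedge G i j = hedge F i j) ->
  (forall i j, (i <= m)%nat -> (j < n)%nat -> vedge G i j = vedge F i j) ->
  iso_congruent m n F G.
Proof.
  intros Hh Hv.
  pose proof (grid_eq_of_diff m n (fun i j => px (G i j)) (fun i j => px (F i j))
    (fun i j Hi Hj => f_equal px (Hh i j Hi Hj)) (fun i j Hi Hj => f_equal px (Hv i j Hi Hj))) as Tx.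
  pose proof (grid_eq_of_diff m n (fun i j => py (G i j)) (fun i j => py (F i j))
    (fun i j Hi Hj => f_equal py (Hh i j Hi Hj)) (fun i j Hi Hj => f_equal py (Hv i j Hi Hj))) as Ty.
  pose proof (grid_eq_of_diff m n (fun i j => pz (G i j)) (fun i j => pz (F i j))
    (fun i j Hi Hj => f_equal pz (Hh i j Hi Hj)) (fun i j Hi Hj => f_equal pz (Hv i j Hi Hj))) as Tz.
  exists 0, 0, 0, (sub3 (G O O) (F O O)); intros i j Hi Hj.
  specialize (Tx i j Hi Hj); specialize (Ty i j Hi Hj); specialize (Tz i j Hi Hj); simpl in *.
  unfold iso_congr_map; rewrite cos_0, sin_0; apply pt3_eq; simpl; lra.
Qed.

Section TopViewOfDeformation.

Variables (m n : nat) (P : R -> net3) (a b : R).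
Hypothesis Hm : (0 < m)%nat.
Hypothesis Hn : (0 < n)%nat.
Hypothesis HPc : forall i j, continuity (fun t => px (P t i j)) /\
  continuity (fun t => py (P t i j)) /\ continuity (fun t => pz (P t i j)).
Hypothesis HPpar : forall s t, a <= s <= b -> a <= t <= b -> parallel3 m n (P s) (P t).
Hypothesis HPtop : forall t, a <= t <= b -> is_net2 m n (top_view (P t)).

Lemma top_view_congruent_iso_congruent (s t : R) : a <= s <= b -> a <= t <= b ->
  eucl_congruent2 m n (top_view (P s)) (top_view (P t)) -> iso_congruent m n (P s) (P t).
Proof.
  intros Hs Ht (a11 & a12 & a21 & a22 & b1 & b2 & O1 & O2 & O3 & Heq).
  assert (Hcont : forall i1 j1 i2 j2, let U := fun r => sub3 (P r i1 j1) (P r i2 j2) in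
            continuity (fun r => px (U r)) /\ continuity (fun r => py (U r)) /\
            continuity (fun r => pz (U r))).
  { intros i1 j1 i2 j2; cbv zeta; simpl.
    destruct (HPc i1 j1) as (X1 & Y1 & Z1), (HPc i2 j2) as (X2 & Y2 & Z2).
    repeat split; apply continuity_sub; assumption. }
  assert (Htop : forall i1 j1 i2 j2, (i1 <= m)%nat -> (j1 <= n)%nat ->
            (i2 <= m)%nat -> (j2 <= n)%nat ->
            let e := sub3 (P s i1 j1) (P s i2 j2) in
            top (sub3 (P t i1 j1) (P t i2 j2)) =
            P2 (a11 * px e + a12 * py e) (a21 * px e + a22 * py e)).
  { intros i1 j1 i2 j2 Hi1 Hj1 Hi2 Hj2; cbv zeta.
    pose proof (Heq i1 j1 Hi1 Hj1) as E1; pose proof (Heq i2 j2 Hi2 Hj2) as E2.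
    unfold top_view, top in E1, E2.
    apply pt2_eq; simpl; [apply (f_equal qx) in E1, E2 | apply (f_equal qy) in E1, E2];
      simpl in E1, E2; rewrite E1, E2; ring. }
  apply iso_congruent_of_edges.
  - intros i j Hi Hj; destruct (Hcont (S i) j i j) as (Cx & Cy & Cz).
    apply (parallel_family_rigid _ a b s t a11 a12 a21 a22 Cx Cy Cz); try assumption.
    + intros r Hr; apply (HPpar s r Hs Hr); assumption.
    + intros r Hr; apply (is_net2_hedge_pos m n _ Hn (HPtop r Hr)); assumption.
    + apply Htop; lia.
  - intros i j Hi Hj; destruct (Hcont i (S j) i j) as (Cx & Cy & Cz).
    apply (parallel_family_rigid _ a b s t a11 a12 a21 a22 Cx Cy Cz); try assumption.
    + intros r Hr; apply (HPpar s r Hs Hr); assumption.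
    + intros r Hr; apply (is_net2_vedge_pos m n _ Hm (HPtop r Hr)); assumption.
    + apply Htop; lia.
Qed.

End TopViewOfDeformation.

Lemma deformable_iso_top_view (m n : nat) (F : net3) :
  (0 < m)%nat -> (0 < n)%nat -> is_net3 m n F ->
  (forall i j, (i < m)%nat -> (j < n)%nat -> face_nonisotropic F i j) ->
  deformable_iso m n F -> deformable2 m n (top_view F).
Proof.
  intros Hm Hn HF Hiso (P & a & b & t0 & Hc & Hab & Ht0 & HPt0 & Hnet & Hpair).
  assert (Htop : forall t, a <= t <= b -> is_net2 m n (top_view (P t))).
  { intros t Ht; apply top_view_net; [now apply Hnet|].
    intros i j Hi Hj.
    destruct (Hpair t0 t Ht0 Ht) as [[Hph Hpv] _].
    destruct (Hph i j Hi ltac:(lia)) as [k Ek], (Hpv (S i) j ltac:(lia) Hj) as [l El].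
    rewrite !HPt0 in Ek, El by lia.
    apply (face_nonisotropic_parallel F (P t) i j k l Ek El); [|now apply Hiso].
    apply (Hnet t Ht i j Hi Hj). }
  exists (fun t => top_view (P t)), a, b, t0.
  split; [intros i j; destruct (Hc i j) as (X & Y & _); split; assumption|].
  split; [exact Hab|]; split; [exact Ht0|].
  split; [intros i j Hi Hj; unfold top_view; rewrite HPt0 by assumption; reflexivity|].
  split; [exact Htop|].
  intros s t Hs Ht; destruct (Hpair s t Hs Ht) as (Hpar & Har & Hnc).
  split; [apply parallel3_top, Hpar|]; split; [exact Har|].
  intros Hst Hcong; apply (Hnc Hst).
  apply (top_view_congruent_iso_congruent m n P a b); auto.
  intros; apply Hpair; assumption.
Qed.
Definition ratio (w : pt2) (e : pt3) : R := (qx w * px e + qy w * py e) / norm2 (top e).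

Lemma ratio_scal2 (w : pt2) (e : pt3) (k : R) :
  0 < norm2 (top e) -> w = scal2 k (top e) -> ratio w e = k.
Proof.
  unfold ratio, norm2; simpl; intros Hpos ->; simpl; field; lra.
Qed.

Lemma continuity_ratio (w : R -> pt2) (e : pt3) :
  continuity (fun t => qx (w t)) -> continuity (fun t => qy (w t)) ->
  continuity (fun t => ratio (w t) e).
Proof.
  intros Cx Cy; unfold ratio, Rdiv.
  apply continuity_mul; [|apply continuity_cst].
  apply continuity_add; apply continuity_mul; auto using continuity_cst.
Qed.

Section LiftOfDeformation.

Variables (m n : nat) (F : net3) (Q : R -> net2) (a b t0 : R).
Hypothesis Hm : (0 < m)%nat.
Hypothesis Hn : (0 < n)%nat.
Hypothesis HF : is_net3 m n F.
Hypothesis Hiso : forall i j, (i < m)%nat -> (j < n)%nat -> face_nonisotropic F i j.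
Hypothesis HQc : forall i j, continuity (fun t => qx (Q t i j)) /\ continuity (fun t => qy (Q t i j)).
Hypothesis HQt0 : forall i j, (i <= m)%nat -> (j <= n)%nat -> Q t0 i j = top_view F i j.
Hypothesis HQnet : forall t, a <= t <= b -> is_net2 m n (Q t).
Hypothesis HQpar : forall t, a <= t <= b -> parallel2 m n (Q t0) (Q t).

Definition lamh (t : R) (i j : nat) : R := ratio (sub2 (Q t (S i) j) (Q t i j)) (hedge F i j).
Definition lamv (t : R) (i j : nat) : R := ratio (sub2 (Q t i (S j)) (Q t i j)) (vedge F i j).

(* Each spatial edge of F is scaled by the factor by which Q t scales its top view. *)
Definition height (t : R) : nat -> nat -> R :=
  grid_potential (pz (F O O)) (fun i j => lamh t i j * pz (hedge F i j))
                              (fun i j => lamv t i j * pz (vedge F i j)).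

Definition lift (t : R) : net3 := fun i j => P3 (qx (Q t i j)) (qy (Q t i j)) (height t i j).

Lemma top_lift (t : R) (i j : nat) : top (lift t i j) = Q t i j.
Proof. unfold top, lift; simpl; destruct (Q t i j); reflexivity. Qed.

Lemma Q_hedge_scal (t : R) (i j : nat) : a <= t <= b -> (i < m)%nat -> (j <= n)%nat ->
  sub2 (Q t (S i) j) (Q t i j) = scal2 (lamh t i j) (top (hedge F i j)).
Proof.
  intros Ht Hi Hj; destruct (proj1 (HQpar t Ht) i j Hi Hj) as [k Ek].
  rewrite !HQt0 in Ek by lia.
  unfold lamh; rewrite (ratio_scal2 _ _ k); [exact Ek | | exact Ek].
  exact (is_net2_hedge_pos m n _ Hn (top_view_net m n F HF Hiso) i j Hi Hj).
Qed.

Lemma Q_vedge_scal (t : R) (i j : nat) : a <= t <= b -> (i <= m)%nat -> (j < n)%nat ->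
  sub2 (Q t i (S j)) (Q t i j) = scal2 (lamv t i j) (top (vedge F i j)).
Proof.
  intros Ht Hi Hj; destruct (proj2 (HQpar t Ht) i j Hi Hj) as [k Ek].
  rewrite !HQt0 in Ek by lia.
  unfold lamv; rewrite (ratio_scal2 _ _ k); [exact Ek | | exact Ek].
  exact (is_net2_vedge_pos m n _ Hm (top_view_net m n F HF Hiso) i j Hi Hj).
Qed.

(* The z-increments close up around each face because the face of F is planar
   and the corresponding face of Q t closes up. *)
Lemma height_increments_closed (t : R) : a <= t <= b ->
  forall i j, (i < m)%nat -> (j < n)%nat ->
  lamh t i j * pz (hedge F i j) + lamv t (S i) j * pz (vedge F (S i) j) =
  lamv t i j * pz (vedge F i j) + lamh t i (S j) * pz (hedge F i (S j)).
Proof.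
  intros Ht i j Hi Hj; destruct (HF i j Hi Hj) as [HD _].
  destruct (coplanar_on_slope _ _ _ _ HD (Hiso i j Hi Hj)) as (al & be & S1 & S2 & S3 & S4).
  rewrite (on_slope_scaled_edge al be _ (hedge F i j) _ S1 (Q_hedge_scal t i j Ht Hi ltac:(lia))),
    (on_slope_scaled_edge al be _ (vedge F (S i) j) _ S2 (Q_vedge_scal t (S i) j Ht Hi Hj)),
    (on_slope_scaled_edge al be _ (vedge F i j) _ S3 (Q_vedge_scal t i j Ht ltac:(lia) Hj)),
    (on_slope_scaled_edge al be _ (hedge F i (S j)) _ S4 (Q_hedge_scal t i (S j) Ht Hi Hj)).
  simpl; ring.
Qed.

Lemma lift_hedge (t : R) (i j : nat) : a <= t <= b -> (i < m)%nat -> (j <= n)%nat ->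
  hedge (lift t) i j = scal3 (lamh t i j) (hedge F i j).
Proof.
  intros Ht Hi Hj; pose proof (Q_hedge_scal t i j Ht Hi Hj) as E.
  apply pt3_eq; simpl; [apply (f_equal qx E) | apply (f_equal qy E) |].
  unfold height; simpl; ring.
Qed.

Lemma lift_vedge (t : R) (i j : nat) : a <= t <= b -> (i <= m)%nat -> (j < n)%nat ->
  vedge (lift t) i j = scal3 (lamv t i j) (vedge F i j).
Proof.
  intros Ht Hi Hj; pose proof (Q_vedge_scal t i j Ht Hi Hj) as E.
  apply pt3_eq; simpl; [apply (f_equal qx E) | apply (f_equal qy E) |].
  apply (grid_potential_vdiff _ _ _ m n (height_increments_closed t Ht)); assumption.
Qed.

Lemma lamh_neq0 (t : R) (i j : nat) : a <= t <= b -> (i < m)%nat -> (j <= n)%nat ->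
  lamh t i j <> 0.
Proof.
  intros Ht Hi Hj E; pose proof (is_net2_hedge_pos m n _ Hn (HQnet t Ht) i j Hi Hj) as H.
  rewrite (Q_hedge_scal t i j Ht Hi Hj), E in H; unfold norm2 in H; simpl in H; lra.
Qed.

Lemma lamv_neq0 (t : R) (i j : nat) : a <= t <= b -> (i <= m)%nat -> (j < n)%nat ->
  lamv t i j <> 0.
Proof.
  intros Ht Hi Hj E; pose proof (is_net2_vedge_pos m n _ Hm (HQnet t Ht) i j Hi Hj) as H.
  rewrite (Q_vedge_scal t i j Ht Hi Hj), E in H; unfold norm2 in H; simpl in H; lra.
Qed.

Lemma continuity_lift (i j : nat) : continuity (fun t => px (lift t i j)) /\
  continuity (fun t => py (lift t i j)) /\ continuity (fun t => pz (lift t i j)).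
Proof.
  destruct (HQc i j) as [Cx Cy]; split; [exact Cx|]; split; [exact Cy|].
  apply continuity_grid_potential; intros i' j'; apply continuity_mul; try apply continuity_cst;
    apply continuity_ratio; simpl;
    [destruct (HQc (S i') j') as [X1 Y1] | destruct (HQc (S i') j') as [X1 Y1]
    | destruct (HQc i' (S j')) as [X1 Y1] | destruct (HQc i' (S j')) as [X1 Y1]];
    destruct (HQc i' j') as [X0 Y0]; apply continuity_sub; assumption.
Qed.

Lemma lift_t0 (i j : nat) : a <= t0 <= b -> (i <= m)%nat -> (j <= n)%nat -> lift t0 i j = F i j.
Proof.
  intros Ht0 Hi Hj.
  assert (Hh1 : forall i j, (i < m)%nat -> (j <= n)%nat -> lamh t0 i j = 1).
  { intros i' j' Hi' Hj'; unfold lamh; apply ratio_scal2.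
    - exact (is_net2_hedge_pos m n _ Hn (top_view_net m n F HF Hiso) i' j' Hi' Hj').
    - rewrite !HQt0 by lia; apply pt2_eq; simpl; ring. }
  assert (Hv1 : forall i j, (i <= m)%nat -> (j < n)%nat -> lamv t0 i j = 1).
  { intros i' j' Hi' Hj'; unfold lamv; apply ratio_scal2.
    - exact (is_net2_vedge_pos m n _ Hm (top_view_net m n F HF Hiso) i' j' Hi' Hj').
    - rewrite !HQt0 by lia; apply pt2_eq; simpl; ring. }
  assert (Hdiff : height t0 i j - pz (F i j) = height t0 O O - pz (F O O)).
  { apply (grid_eq_of_diff m n (height t0) (fun i j => pz (F i j))); try assumption;
      intros i' j' Hi' Hj'.
    - pose proof (f_equal pz (lift_hedge t0 i' j' Ht0 Hi' Hj')) as E; cbn [pz hedge vedge lift sub3 scal3] in E.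
      rewrite Hh1 in E by assumption; lra.
    - pose proof (f_equal pz (lift_vedge t0 i' j' Ht0 Hi' Hj')) as E; cbn [pz hedge vedge lift sub3 scal3] in E.
      rewrite Hv1 in E by assumption; lra. }
  apply pt3_eq; simpl; [rewrite HQt0 by assumption; reflexivity ..|].
  change (height t0 O O) with (pz (F O O)) in Hdiff; lra.
Qed.

(* The edges of a lifted face are multiples of those of the planar face of F, so
   they stay on its slope; the top view of the lifted face is the face of Q t. *)
Lemma lift_net (t : R) : a <= t <= b -> is_net3 m n (lift t).
Proof.
  intros Ht i j Hi Hj; destruct (HF i j Hi Hj) as [HD _].
  destruct (coplanar_on_slope _ _ _ _ HD (Hiso i j Hi Hj)) as (al & be & S1 & S2 & S3 & _).
  assert (L1 : on_slope al be (hedge (lift t) i j))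
    by (rewrite lift_hedge by (assumption || lia); apply on_slope_scal, S1).
  assert (L2 : on_slope al be (vedge (lift t) (S i) j))
    by (rewrite lift_vedge by (assumption || lia); apply on_slope_scal, S2).
  assert (L3 : on_slope al be (vedge (lift t) i j))
    by (rewrite lift_vedge by (assumption || lia); apply on_slope_scal, S3).
  apply convex_quad3_top.
  - apply (det3_on_slope al be); [exact L1 | | exact L3].
    exact (on_slope_sub_trans _ _ _ _ _ L2 L1).
  - rewrite <- cross2_top, !top_lift.
    destruct (HQnet t Ht i j Hi Hj) as [H0 _]; intro E; rewrite E in H0; lra.
  - rewrite !top_lift; exact (HQnet t Ht i j Hi Hj).
Qed.

Lemma lift_deformable : a < b -> a <= t0 <= b ->
  (forall s t, a <= s <= b -> a <= t <= b ->
     same_areas2 m n (Q s) (Q t) /\ (s <> t -> ~ eucl_congruent2 m n (Q s) (Q t))) ->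
  deformable_iso m n F.
Proof.
  intros Hab Ht0 Hpair; exists lift, a, b, t0.
  split; [exact continuity_lift|].
  split; [exact Hab|]; split; [exact Ht0|].
  split; [intros i j; apply lift_t0; assumption|].
  split; [exact lift_net|].
  intros s t Hs Ht; destruct (Hpair s t Hs Ht) as (Har & Hnc).
  split; [split|split].
  - intros i j Hi Hj; exists (lamh t i j / lamh s i j).
    pose proof (lamh_neq0 s i j Hs Hi Hj).
    change (hedge (lift t) i j = scal3 (lamh t i j / lamh s i j) (hedge (lift s) i j)).
    rewrite !lift_hedge by assumption; apply pt3_eq; simpl; field; assumption.
  - intros i j Hi Hj; exists (lamv t i j / lamv s i j).
    pose proof (lamv_neq0 s i j Hs Hi Hj).
    change (vedge (lift t) i j = scal3 (lamv t i j / lamv s i j) (vedge (lift s) i j)).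
    rewrite !lift_vedge by assumption; apply pt3_eq; simpl; field; assumption.
  - intros i j Hi Hj; unfold face_area_iso, face_area2, top_view; rewrite !top_lift.
    apply Har; assumption.
  - intros Hst Hcong; apply (Hnc Hst).
    destruct (iso_congruent_top _ _ _ _ Hcong)
      as (a11 & a12 & a21 & a22 & b1 & b2 & O1 & O2 & O3 & Heq).
    exists a11, a12, a21, a22, b1, b2; repeat split; try assumption.
    intros i j Hi Hj; specialize (Heq i j Hi Hj); unfold top_view in Heq.
    rewrite !top_lift in Heq; exact Heq.
Qed.

End LiftOfDeformation.

Lemma top_view_deformable_iso (m n : nat) (F : net3) :
  (0 < m)%nat -> (0 < n)%nat -> is_net3 m n F ->
  (forall i j, (i < m)%nat -> (j < n)%nat -> face_nonisotropic F i j) ->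
  deformable2 m n (top_view F) -> deformable_iso m n F.
Proof.
  intros Hm Hn HF Hiso (Q & a & b & t0 & Hc & Hab & Ht0 & HQt0 & Hnet & Hpair).
  apply (lift_deformable m n F Q a b t0); try assumption.
  - intros t Ht; apply Hpair; assumption.
  - intros s t Hs Ht; split; apply Hpair; assumption.
Qed.

Theorem lemma11 (m n : nat) (F : net3) :
  (0 < m)%nat -> (0 < n)%nat ->
  is_net3 m n F ->
  (forall i j, (i < m)%nat -> (j < n)%nat -> face_nonisotropic F i j) ->
  (deformable_iso m n F <-> deformable2 m n (top_view F)).
Proof.
  intros Hm Hn HF Hiso; split.
  - apply deformable_iso_top_view; assumption.
  - apply top_view_deformable_iso; assumption.
Qed.
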